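(* Let $c,M>0$ and assume that either $\eta>1$ and $a,b>0$, or $\eta=1$ and $b>a>0$. Then there is a constant $C>0$ such that for all real $x,y$ with $0\le x\le My<\infty$, $$\frac{a(1+x)y^2+b(1+x)^\eta y^2}{1+y^2}-\frac{2b(1+x)^\eta y^4}{(1+y^2)^2}+\frac{c(1+x)^\eta y^4}{(1+y^2)^2(1+\log(1+y^2))}\le C.$$ *)

From Stdlib Require Import Reals.
Open Scope R_scope.

(* The quantity bounded in Lemma 5.1; (1+x)^eta is Rpower (1+x) eta, which is
   the usual real power since 1+x > 0 whenever x >= 0. *)
Definition lhs51 (a b c eta x y : R) : R :=
  (a * (1 + x) * y ^ 2 + b * Rpower (1 + x) eta * y ^ 2) / (1 + y ^ 2)
  - 2 * b * Rpower (1 + x) eta * y ^ 4 / (1 + y ^ 2) ^ 2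
  + c * Rpower (1 + x) eta * y ^ 4
      / ((1 + y ^ 2) ^ 2 * (1 + ln (1 + y ^ 2))).

(* Write u = y^2.  The quantity is a (1+x) u/(1+u) + (1+x)^eta g(u), where the
   coefficient g(u) of (1+x)^eta tends to -b as u -> oo, the logarithm killing
   the contribution of c.  So for any d < b, once u is large the quantity is at
   most a t - d t^eta with t = 1+x >= 1, which is bounded above when eta > 1, or
   when eta = 1 and d >= a (possible exactly because a < b).  For small u the
   constraint x <= M y keeps x, hence everything, bounded. *)
From Stdlib Require Import Reals Lra.
From Coquelicot Require Import Rcomplements.
Open Scope R_scope.

Definition eta_coeff (b c u : R) : R :=
  b * u / (1 + u) - 2 * b * u ^ 2 / (1 + u) ^ 2
  + c * u ^ 2 / ((1 + u) ^ 2 * (1 + ln (1 + u))).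

Lemma ln_nonneg x : 1 <= x -> 0 <= ln x.
Proof. intros hx; rewrite <- ln_1; apply ln_le; lra. Qed.

Lemma lhs51_split a b c eta x y :
  lhs51 a b c eta x y =
  a * (1 + x) * (y ^ 2 / (1 + y ^ 2)) + Rpower (1 + x) eta * eta_coeff b c (y ^ 2).
Proof.
  assert (hL : 0 <= ln (1 + y ^ 2)) by (apply ln_nonneg; nra).
  unfold lhs51, eta_coeff; field; split; nra.
Qed.

Lemma eta_coeff_eq b c u : 0 <= u ->
  eta_coeff b c u =
  (b * u * (1 - u) * (1 + ln (1 + u)) + c * u ^ 2)
  / ((1 + u) ^ 2 * (1 + ln (1 + u))).
Proof.
  intros hu; assert (hL : 0 <= ln (1 + u)) by (apply ln_nonneg; lra).
  unfold eta_coeff; field; lra.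
Qed.

Lemma eta_coeff_le b c u : 0 <= b -> 0 <= c -> 0 <= u -> eta_coeff b c u <= b + c.
Proof.
  intros hb hc hu.
  assert (hL : 0 <= ln (1 + u)) by (apply ln_nonneg; lra).
  set (L := ln (1 + u)) in *.
  rewrite eta_coeff_eq by lra; fold L.
  apply Rle_div_l; [nra|].
  assert (b * u * (1 - u) * (1 + L) <= b * (1 + u) ^ 2 * (1 + L))
    by (apply Rmult_le_compat_r; nra).
  assert (c * u ^ 2 <= c * (1 + u) ^ 2) by nra.
  assert (0 <= c * (1 + u) ^ 2 * L) by (apply Rmult_le_pos; nra).
  nra.
Qed.

Lemma eta_coeff_eventually_le b c d : 0 < c -> 0 <= d < b ->
  exists U, forall u, U <= u -> eta_coeff b c u <= - d.
Proof.
  intros hc hd.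
  set (k := (b - d) / 2).
  assert (hk : 0 < k) by (unfold k; lra).
  exists (Rmax (exp (c / k)) ((b + 3 * d) / k)); intros u hu.
  assert (hu_exp := Rmax_l (exp (c / k)) ((b + 3 * d) / k)).
  assert (hu_quot := Rmax_r (exp (c / k)) ((b + 3 * d) / k)).
  assert (hu1 : 1 <= u).
  { assert (0 < c / k) by (apply Rdiv_lt_0_compat; lra).
    pose proof (exp_ineq1_le (c / k)); lra. }
  assert (hkL : c <= k * ln (1 + u)).
  { assert (hlog : c / k <= ln (1 + u)).
    { rewrite <- (ln_exp (c / k)); apply ln_le; [apply exp_pos | lra]. }
    apply Rmult_le_compat_l with (r := k) in hlog; [|lra].
    replace (k * (c / k)) with c in hlog by (field; lra); exact hlog. }
  assert (hku : b + 3 * d <= k * u).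
  { assert (hquot : (b + 3 * d) / k <= u) by lra.
    apply Rle_div_l in hquot; lra. }
  assert (hL : 0 <= ln (1 + u)) by (apply ln_nonneg; lra).
  set (L := ln (1 + u)) in *.
  rewrite eta_coeff_eq by lra; fold L.
  apply Rle_div_l; [nra|].
  (* b - k - d = k, so the numerator is at most (1 + L) (- k u^2 + (b + 3 d) u). *)
  assert (hcu : c * u ^ 2 <= k * (1 + L) * u ^ 2) by nra.
  assert (hpoly : b * u * (1 - u) + k * u ^ 2 + d * (1 + u) ^ 2 <= 0).
  { replace (b * u * (1 - u) + k * u ^ 2 + d * (1 + u) ^ 2)
      with (u * (b + 2 * d - k * u) + d) by (unfold k; field).
    nra. }
  nra.
Qed.

Lemma Rpower_ge_mul_log t eta : 0 < t -> t * (1 + (eta - 1) * ln t) <= Rpower t eta.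
Proof.
  intros ht; unfold Rpower.
  replace (eta * ln t) with (ln t + (eta - 1) * ln t) by ring.
  rewrite exp_plus, exp_ln by lra.
  apply Rmult_le_compat_l; [lra | apply exp_ineq1_le].
Qed.

Lemma linear_sub_Rpower_bounded a d eta : 0 < a -> 0 < d -> 1 < eta ->
  exists K, forall t, 1 <= t -> a * t - d * Rpower t eta <= K.
Proof.
  intros ha hd heta.
  set (q := a / (d * (eta - 1))).
  assert (hq : d * (eta - 1) * q = a) by (unfold q; field; lra).
  exists (a * exp q); intros t ht.
  assert (hP : 0 < Rpower t eta) by apply exp_pos.
  destruct (Rle_lt_dec q (ln t)) as [hlarge | hsmall].
  - assert (hlog := Rpower_ge_mul_log t eta ltac:(lra)).
    assert (a <= d * (eta - 1) * ln t) by (rewrite <- hq; apply Rmult_le_compat_l; nra).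
    pose proof (exp_pos q); nra.
  - assert (t < exp q) by (rewrite <- (exp_ln t) by lra; apply exp_increasing; lra).
    nra.
Qed.

Lemma lhs51_bounded a b c M eta d K :
  0 <= a -> 0 < c -> 0 < M -> 0 <= eta -> 0 <= d < b ->
  (forall t, 1 <= t -> a * t - d * Rpower t eta <= K) ->
  exists C, 0 < C /\
    forall x y, 0 <= x -> x <= M * y -> lhs51 a b c eta x y <= C.
Proof.
  intros ha hc hM heta hd hK.
  destruct (eta_coeff_eventually_le b c d hc hd) as [U hU].
  set (T := 1 + M * Rmax 1 U).
  set (B := a * T + Rpower T eta * (b + c)).
  exists (Rmax 1 (Rmax K B)); split; [pose proof (Rmax_l 1 (Rmax K B)); lra|].
  intros x y hx hxy.
  assert (hy : 0 <= y) by nra.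
  rewrite lhs51_split.
  assert (hs : 0 <= y ^ 2 / (1 + y ^ 2) <= 1).
  { assert (0 <= y ^ 2) by nra.
    split; [apply Rdiv_le_0_compat | apply (Rdiv_le_1 (y ^ 2))]; lra. }
  assert (hP : 0 < Rpower (1 + x) eta) by apply exp_pos.
  assert (hax : a * (1 + x) * (y ^ 2 / (1 + y ^ 2)) <= a * (1 + x)).
  { rewrite <- (Rmult_1_r (a * (1 + x))) at 2; apply Rmult_le_compat_l; nra. }
  apply (Rle_trans _ (Rmax K B)); [| apply Rmax_r].
  destruct (Rle_lt_dec U (y ^ 2)) as [hlarge | hsmall].
  - apply (Rle_trans _ K); [| apply Rmax_l].
    specialize (hU _ hlarge); specialize (hK (1 + x) ltac:(lra)); nra.
  - apply (Rle_trans _ B); [| apply Rmax_r].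
    assert (hyU : y <= Rmax 1 U).
    { destruct (Rle_lt_dec y 1); [pose proof (Rmax_l 1 U) | pose proof (Rmax_r 1 U)]; nra. }
    assert (hxT : 1 + x <= T) by (unfold T; nra).
    assert (hPT : Rpower (1 + x) eta <= Rpower T eta) by (apply Rle_Rpower_l; lra).
    assert (hg := eta_coeff_le b c (y ^ 2) ltac:(lra) ltac:(lra) ltac:(nra)).
    unfold B; nra.
Qed.

Theorem lemma5p1 (a b c M eta : R) (hc : 0 < c) (hM : 0 < M)
  (hpar : (1 < eta /\ 0 < a /\ 0 < b) \/ (eta = 1 /\ 0 < a /\ a < b)) :
  exists C : R, 0 < C /\
    forall x y : R, 0 <= x -> x <= M * y -> lhs51 a b c eta x y <= C.
Proof.
  destruct hpar as [[heta [ha hb]] | [heta [ha hab]]].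
  - destruct (linear_sub_Rpower_bounded a (b / 2) eta ha ltac:(lra) heta) as [K hK].
    exact (lhs51_bounded a b c M eta (b / 2) K
             ltac:(lra) hc hM ltac:(lra) ltac:(lra) hK).
  - subst eta; apply (lhs51_bounded a b c M 1 a 0); try lra.
    intros t ht; rewrite Rpower_1; lra.
Qed.
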